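(* Let $v\in\Sigma^*$, let $u$ be a $v$-minimal word and $i\in\mathrm{supp}(u)$. The relation $\sigma_i$ on $\mathcal{I}_i$ is right-compatible: if $g\,\sigma_i\,f$, then $g\theta_i(a)\,\sigma_i\,f\theta_i(a)$ for every $a\in\Sigma^*$.
   Context: Let $\mathcal{A}=\langle Q,\Sigma,\delta\rangle$ be a synchronizing automaton with $n$ states $q_1,\dots,q_n$; write $q\cdot u$ for the action of $u\in\Sigma^*$ (extended to subsets) and $\mathrm{rk}(u)=|Q\cdot u|$. Each word acts linearly on $\mathbb{C}Q$ by $q\mapsto q\cdot u$, preserving $w^\perp=\{x:\langle x,q_1+\dots+q_n\rangle=0\}$; let $\rho:\Sigma^*\to\mathbb{M}_{n-1}(\mathbb{C})$ be the induced representation and $\mathcal{R}$ the $\mathbb{C}$-algebra generated by $\rho(\Sigma^* )$. Write $\mathcal{R}/\mathrm{Rad}(\mathcal{R})\cong\prod_{i=1}^k\mathbb{M}_{n_i}(\mathbb{C})$ (Jacobson radical, Wedderburn–Artin) and let $\theta_i:\Sigma^*\to\mathbb{M}_{n_i}(\mathbb{C})$ be $\rho$ followed by the quotient map and the $i$-th projection; $0_i$ is the zero matrix. The monoid $\theta_i(\Sigma^* )$ has a unique $0$-minimal ideal $\mathcal{I}_i$. The support of a word $z$ is $\mathrm{supp}(z)=\{i:\theta_i(z)\neq0_i\}$. For $v\in\Sigma^*$, a word $u\in\Sigma^*v\Sigma^*$ is $v$-minimal if $\mathrm{supp}(u)\neq\emptyset$ and there is no $z\in\Sigma^*v\Sigma^*$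 with $\emptyset\neq\mathrm{supp}(z)\subsetneq\mathrm{supp}(u)$. For such $u$, $i\in\mathrm{supp}(u)$ and $g\in\mathcal{I}_i$, a word $w$ $u$-represents $g$ if $w\in\Sigma^*u\Sigma^*$, $\theta_i(w)=g$, and either $g=0_i$ or $\mathrm{rk}(w)$ is minimum among all words $w'\in\Sigma^*u\Sigma^*$ with $\theta_i(w')=g$. Define the relation $\sigma_i$ on $\mathcal{I}_i$ by $g\,\sigma_i\,f$ iff either $g=f$, or there exist words $w_1,w_2$ that $u$-represent $g$ and $f$ respectively with $|Q\cdot w_1\cap Q\cdot w_2|>1$. *)

From HB Require Import structures.
From mathcomp Require Import all_boot all_order all_algebra.
Set Implicit Arguments. Unset Strict Implicit. Unset Printing Implicit Defensive.
Import GRing.Theory.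
Local Open Scope ring_scope.

Definition act (n : nat) (Sigma : finType) (delta : 'I_n -> Sigma -> 'I_n)
  (q : 'I_n) (u : seq Sigma) : 'I_n := foldl delta q u.

Definition imQ (n : nat) (Sigma : finType) (delta : 'I_n -> Sigma -> 'I_n)
  (u : seq Sigma) : {set 'I_n} := [set act delta q u | q : 'I_n].

Definition rk (n : nat) (Sigma : finType) (delta : 'I_n -> Sigma -> 'I_n)
  (u : seq Sigma) : nat := #|imQ delta u|.

Definition synchronizing (n : nat) (Sigma : finType)
  (delta : 'I_n -> Sigma -> 'I_n) : Prop :=
  exists u : seq Sigma, rk delta u = 1%N.

Definition factor_of (Sigma : Type) (v u : seq Sigma) : Prop :=
  exists x y : seq Sigma, u = x ++ v ++ y.

(* matrix of the linear action q |-> q . u on C Q (row-vector convention: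
   the row vector e_p is sent to e_p *m actmx u = e_(p . u)) *)
Definition actmx (C : nzRingType) (n : nat) (Sigma : finType)
  (delta : 'I_n -> Sigma -> 'I_n) (u : seq Sigma) : 'M[C]_n :=
  \matrix_(p, q) ((act delta p u == q)%:R).

(* rho is the representation induced on w^perp = {x | <x, q_1+...+q_n> = 0},
   written in some basis of w^perp: the rows of B form a basis of w^perp. *)
Definition induced_rep (C : fieldType) (n : nat) (Sigma : finType)
  (delta : 'I_n -> Sigma -> 'I_n) (rho : seq Sigma -> 'M[C]_(n.-1)) : Prop :=
  exists B : 'M[C]_(n.-1, n),
    [/\ row_free B,
        B *m (const_mx 1 : 'cV[C]_n) = 0
      & forall u, B *m actmx C delta u = rho u *m B].

Definition gen_alg (C : fieldType) (m : nat) (S : 'M[C]_m -> Prop)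
  (A : 'M[C]_m) : Prop :=
  forall P : 'M[C]_m -> Prop,
    (forall x, S x -> P x) ->
    P 1%:M ->
    (forall x y, P x -> P y -> P (x + y)) ->
    (forall (c : C) x, P x -> P (c *: x)) ->
    (forall x y, P x -> P y -> P (x *m y)) ->
    P A.

Definition unit_in (C : fieldType) (m : nat) (R : 'M[C]_m -> Prop)
  (x : 'M[C]_m) : Prop :=
  exists y, R y /\ y *m x = 1%:M /\ x *m y = 1%:M.

Definition jacobson (C : fieldType) (m : nat) (R : 'M[C]_m -> Prop)
  (x : 'M[C]_m) : Prop :=
  R x /\ forall a, R a -> unit_in R (1%:M - a *m x).

(* Phi = (Phi_i)_i restricted to R induces an isomorphism of C-algebras
   R / Rad(R) ~= prod_{i < k} M_{n_i}(C)  (Wedderburn--Artin data). *)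
Definition wedderburn_data (C : fieldType) (m : nat) (R : 'M[C]_m -> Prop)
  (k : nat) (ni : 'I_k -> nat) (Phi : forall i : 'I_k, 'M[C]_m -> 'M[C]_(ni i))
  : Prop :=
  (forall i, (0 < ni i)%N) /\
  (forall i, Phi i 1%:M = 1%:M) /\
  (forall i (c : C) x y, R x -> R y -> Phi i (c *: x + y) = c *: Phi i x + Phi i y) /\
  (forall i x y, R x -> R y -> Phi i (x *m y) = Phi i x *m Phi i y) /\
  (forall g : forall i : 'I_k, 'M[C]_(ni i),
      exists x, R x /\ forall i, Phi i x = g i) /\
  (forall x, R x -> ((forall i, Phi i x = 0) <-> jacobson R x)).

Definition mon_ideal (C : fieldType) (m : nat) (M I : 'M[C]_m -> Prop) : Prop :=
  (exists x, I x) /\ (forall x, I x -> M x) /\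
  (forall x y, I x -> M y -> I (x *m y) /\ I (y *m x)).

Definition zero_minimal_ideal (C : fieldType) (m : nat) (M I : 'M[C]_m -> Prop)
  : Prop :=
  mon_ideal M I /\ (exists x, I x /\ x <> 0) /\
  forall J, mon_ideal M J -> (forall x, J x -> I x) ->
    (forall x, J x -> x = 0) \/ (forall x, J x <-> I x).

Definition supp (C : fieldType) (Sigma : Type) (k : nat) (ni : 'I_k -> nat)
  (theta : forall i : 'I_k, seq Sigma -> 'M[C]_(ni i)) (z : seq Sigma)
  : {set 'I_k} := [set i | theta i z != 0].

Definition v_minimal (C : fieldType) (Sigma : Type) (k : nat) (ni : 'I_k -> nat)
  (theta : forall i : 'I_k, seq Sigma -> 'M[C]_(ni i)) (v u : seq Sigma) : Prop :=
  factor_of v u /\ supp theta u != set0 /\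
  ~ (exists z, factor_of v z /\ supp theta z != set0 /\
               supp theta z \proper supp theta u).

Definition represents (C : fieldType) (n : nat) (Sigma : finType)
  (delta : 'I_n -> Sigma -> 'I_n) (k : nat) (ni : 'I_k -> nat)
  (theta : forall i : 'I_k, seq Sigma -> 'M[C]_(ni i))
  (u : seq Sigma) (i : 'I_k) (g : 'M[C]_(ni i)) (w : seq Sigma) : Prop :=
  factor_of u w /\ theta i w = g /\
  (g = 0 \/ forall w', factor_of u w' -> theta i w' = g ->
                       (rk delta w <= rk delta w')%N).

Definition sigma_rel (C : fieldType) (n : nat) (Sigma : finType)
  (delta : 'I_n -> Sigma -> 'I_n) (k : nat) (ni : 'I_k -> nat)
  (theta : forall i : 'I_k, seq Sigma -> 'M[C]_(ni i))
  (u : seq Sigma) (i : 'I_k) (g f : 'M[C]_(ni i)) : Prop :=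
  g = f \/
  exists w1 w2, @represents C n Sigma delta k ni theta u i g w1 /\ @represents C n Sigma delta k ni theta u i f w2 /\
                (1 < #|imQ delta w1 :&: imQ delta w2|)%N.

Definition thetaOf (C : fieldType) (m : nat) (Sigma : Type) (k : nat)
  (ni : 'I_k -> nat) (Phi : forall i : 'I_k, 'M[C]_m -> 'M[C]_(ni i))
  (rho : seq Sigma -> 'M[C]_m) (i : 'I_k) (w : seq Sigma) : 'M[C]_(ni i) :=
  Phi i (rho w).

From HB Require Import structures.
From mathcomp Require Import all_boot all_order all_algebra.
Import GRing.Theory.
Local Open Scope ring_scope.

Set Implicit Arguments.
Unset Strict Implicit.
Unset Printing Implicit Defensive.

(* theta_i is a monoid morphism that factors through the finite transition
   monoid of the automaton.  If g lies in the 0-minimal ideal I_i and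
   g theta_i(a) <> 0, then g theta_i(a) generates I_i, so g = theta_i(y) g
   theta_i(s) with s = a z; finiteness of the transition monoid then yields b
   with g theta_i(a b) = g.  Hence a rank-minimal word w representing g stays
   rank-minimal after appending a, i.e. rk(w a) = rk(w), so q |-> q.a is
   injective on Q.w and cannot merge the common states of two representatives. *)

Section Action.

Variables (n : nat) (Sigma : finType) (delta : 'I_n -> Sigma -> 'I_n).

Lemma act_cat q x y : act delta q (x ++ y) = act delta (act delta q x) y.
Proof. by rewrite /act foldl_cat. Qed.

Lemma imQ_cat x y : imQ delta (x ++ y) = (act delta ^~ y) @: imQ delta x.
Proof. by rewrite /imQ -imset_comp; apply: eq_imset => q /=; apply: act_cat. Qed.

Lemma rk_cat x y : (rk delta (x ++ y) <= rk delta x)%N.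
Proof. by rewrite /rk imQ_cat leq_imset_card. Qed.

Lemma card_imQI_cat w1 w2 a : rk delta (w2 ++ a) = rk delta w2 ->
  (#|imQ delta w1 :&: imQ delta w2|
     <= #|imQ delta (w1 ++ a) :&: imQ delta (w2 ++ a)|)%N.
Proof.
move=> rk_eq; set W := imQ delta w1 :&: imQ delta w2.
have inj_a : {in imQ delta w2 &, injective (act delta ^~ a)}.
  by apply/imset_injP; move: rk_eq; rewrite /rk imQ_cat => ->.
have -> : #|W| = #|(act delta ^~ a) @: W|.
  by symmetry; apply: card_in_imset; apply: sub_in2 inj_a => q /setIP[].
apply/subset_leq_card/subsetP => _ /imsetP[q /setIP[q1 q2] ->].
by rewrite inE !imQ_cat !imset_f.
Qed.

Lemma actmx_cat (C : fieldType) x y :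
  actmx C delta (x ++ y) = actmx C delta x *m actmx C delta y.
Proof.
apply/matrixP => p q; rewrite !mxE (bigD1 (act delta p x)) //= big1.
  by rewrite !mxE eqxx mul1r addr0 act_cat.
by move=> r /negbTE neq_r; rewrite !mxE eq_sym neq_r mul0r.
Qed.

Lemma actmx_nil (C : fieldType) : actmx C delta [::] = 1%:M.
Proof. by apply/matrixP => p q; rewrite !mxE. Qed.

Variables (C : fieldType) (rho : seq Sigma -> 'M[C]_(n.-1)).
Hypothesis rho_induced : induced_rep delta rho.

Lemma induced_rep_cat x y : rho (x ++ y) = rho x *m rho y.
Proof.
case: rho_induced => B [freeB _ BE]; apply: (row_free_inj freeB) => /=.
by rewrite -BE actmx_cat mulmxA BE -!mulmxA BE.
Qed.

Lemma induced_rep_nil : rho [::] = 1%:M.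
Proof.
case: rho_induced => B [freeB _ BE]; apply: (row_free_inj freeB) => /=.
by rewrite -BE actmx_nil mulmx1 mul1mx.
Qed.

Lemma induced_rep_act x y : act delta ^~ x =1 act delta ^~ y -> rho x = rho y.
Proof.
case: rho_induced => B [freeB _ BE] xy; apply: (row_free_inj freeB) => /=.
by rewrite -!BE; congr (B *m _); apply/matrixP => p q; rewrite !mxE xy.
Qed.

End Action.

Definition wpow (T : Type) (s : seq T) (k : nat) : seq T := flatten (nseq k s).

Lemma wpowD (T : Type) (s : seq T) k l : wpow s (k + l) = wpow s k ++ wpow s l.
Proof. by rewrite /wpow nseqD flatten_cat. Qed.

Lemma wpowS (T : Type) (s : seq T) k : wpow s k.+1 = s ++ wpow s k.
Proof. by []. Qed.

Lemma wpowSr (T : Type) (s : seq T) k : wpow s k.+1 = wpow s k ++ s.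
Proof. by rewrite -addn1 wpowD /wpow /= cats0. Qed.

Lemma finType_sequence_repeats (T : finType) (F : nat -> T) :
  exists i p, (0 < p)%N /\ F (i + p)%N = F i.
Proof.
have /injectivePn[j1 [j2 neq_j F_j]] : ~~ injectiveb (F \o @nat_of_ord #|T|.+1).
  by apply/injectiveP => /leq_card; rewrite card_ord ltnn.
wlog lt_j : j1 j2 neq_j F_j / (j1 < j2)%N.
  move=> hwlog; have [lt12|lt21|/val_inj eq_j] := ltngtP j1 j2.
  - exact: (hwlog j1 j2).
  - by apply: (hwlog j2 j1); rewrite 1?eq_sym.
  - by rewrite eq_j eqxx in neq_j.
by exists j1, (j2 - j1)%N; rewrite subn_gt0 subnKC ?(ltnW lt_j).
Qed.

Section ZeroMinimalIdeal.

Variables (C : fieldType) (n : nat) (Sigma : finType).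
Variables (delta : 'I_n -> Sigma -> 'I_n) (m : nat) (th : seq Sigma -> 'M[C]_m).
Hypothesis th_cat : forall x y, th (x ++ y) = th x *m th y.
Hypothesis th_nil : th [::] = 1%:M.
Hypothesis th_act : forall x y, act delta ^~ x =1 act delta ^~ y -> th x = th y.

Lemma th_wpow_periodic s :
  exists i p, (0 < p)%N /\ th (wpow s (i + p)) = th (wpow s i).
Proof.
have [i [p [p_gt0 periodic]]] :=
  finType_sequence_repeats (fun j => [ffun q => act delta q (wpow s j)]).
exists i, p; split=> //; apply: th_act => q.
by have := congr1 (fun f : {ffun _ -> _} => f q) periodic; rewrite !ffunE.
Qed.

Lemma th_fixed_right (g : 'M[C]_m) y s : g = th y *m g *m th s ->
  exists p, (0 < p)%N /\ g *m th (wpow s p) = g.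
Proof.
move=> gE.
have gEk k : g = th (wpow y k) *m g *m th (wpow s k).
  elim: k => [|k IHk]; first by rewrite th_nil mul1mx mulmx1.
  by rewrite wpowS wpowSr !th_cat {1}gE {1}IHk !mulmxA.
have [i [p [p_gt0 periodic]]] := th_wpow_periodic s.
exists p; split=> //.
by rewrite {1}(gEk i) -mulmxA -th_cat -wpowD periodic -gEk.
Qed.

Variable I : 'M[C]_m -> Prop.
Hypothesis I_min : zero_minimal_ideal (fun g => exists w, g = th w) I.

Lemma zero_minimal_ideal_generated (h g : 'M[C]_m) : I h -> h != 0 -> I g ->
  exists y z, g = th y *m h *m th z.
Proof.
case: I_min => [[_ [I_sub I_ideal]] [_ I_minimal]] Ih h_neq0 Ig.
pose J x := exists y z, x = th y *m h *m th z.
have Jh : J h by exists [::], [::]; rewrite th_nil mul1mx mulmx1.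
have J_sub x : J x -> I x.
  move=> [y [z ->]]; have [_ Iyh] := I_ideal h (th y) Ih (ex_intro _ y erefl).
  by case: (I_ideal _ (th z) Iyh (ex_intro _ z erefl)).
have J_ideal : mon_ideal (fun g => exists w, g = th w) J.
  split; first by exists h.
  split=> [x /J_sub /I_sub //|x _ [y [z ->]] [w ->]].
  by split; [exists y, (z ++ w) | exists (w ++ y), z]; rewrite th_cat !mulmxA.
case: (I_minimal J J_ideal J_sub) => [/(_ h Jh) h_eq0 | JI].
  by rewrite h_eq0 eqxx in h_neq0.
exact/JI.
Qed.

Lemma zero_minimal_ideal_return (g : 'M[C]_m) a : I g -> g *m th a != 0 ->
  exists b, g *m th (a ++ b) = g.
Proof.
move=> Ig ga_neq0.
have Iga : I (g *m th a).
  case: I_min => [[_ [_ I_ideal]] _].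
  by case: (I_ideal g (th a) Ig (ex_intro _ a erefl)).
have [y [z gE]] := zero_minimal_ideal_generated Iga ga_neq0 Ig.
have [p [p_gt0 gp]] : exists p, (0 < p)%N /\ g *m th (wpow (a ++ z) p) = g.
  by apply: (th_fixed_right (y := y)); rewrite th_cat {1}gE !mulmxA.
exists (z ++ wpow (a ++ z) p.-1).
by rewrite catA -[_ ++ wpow _ _]/(wpow (a ++ z) p.-1.+1) prednK.
Qed.

End ZeroMinimalIdeal.

Lemma factor_of_catr (Sigma : Type) (u w a : seq Sigma) :
  factor_of u w -> factor_of u (w ++ a).
Proof. by case=> [x [y ->]]; exists x, (y ++ a); rewrite -!catA. Qed.

Section SigmaRel.

Variables (C : fieldType) (n : nat) (Sigma : finType) (delta : 'I_n -> Sigma -> 'I_n).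
Variables (k : nat) (ni : 'I_k -> nat).
Variable theta : forall i : 'I_k, seq Sigma -> 'M[C]_(ni i).
Variables (u : seq Sigma) (i : 'I_k) (I : 'M[C]_(ni i) -> Prop).
Hypothesis th_cat : forall x y, theta i (x ++ y) = theta i x *m theta i y.
Hypothesis th_nil : theta i [::] = 1%:M.
Hypothesis th_act :
  forall x y, act delta ^~ x =1 act delta ^~ y -> theta i x = theta i y.
Hypothesis I_min : zero_minimal_ideal (fun g => exists w, g = theta i w) I.

Local Notation represents := (@represents C n Sigma delta k ni theta u i).
Local Notation sigma_rel := (@sigma_rel C n Sigma delta k ni theta u i).

Lemma represents_rk_min (g : 'M[C]_(ni i)) w w' : g != 0 -> represents g w ->
  factor_of u w' -> theta i w' = g -> (rk delta w <= rk delta w')%N.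
Proof.
by move=> g_neq0 [_ [_ [g_eq0|w_min]]]; [rewrite g_eq0 eqxx in g_neq0 | apply: w_min].
Qed.

Lemma represents_rk_catr (g : 'M[C]_(ni i)) a w :
  I g -> g *m theta i a != 0 -> represents g w -> rk delta (w ++ a) = rk delta w.
Proof.
move=> Ig ga_neq0 rep; have [fw [tw _]] := rep.
have g_neq0 : g != 0 by apply: contraNneq ga_neq0 => ->; rewrite mul0mx.
have [b gb] := zero_minimal_ideal_return th_cat th_nil th_act I_min Ig ga_neq0.
apply/eqP; rewrite eqn_leq rk_cat (leq_trans _ (rk_cat delta (w ++ a) b)) //.
apply: represents_rk_min g_neq0 rep _ _; first by do 2!apply: factor_of_catr.
by rewrite -catA th_cat tw.
Qed.

Lemma represents_catr (g : 'M[C]_(ni i)) a w : I g -> represents g w ->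
  represents (g *m theta i a) (w ++ a).
Proof.
move=> Ig rep; have [fw [tw _]] := rep.
split; first exact: factor_of_catr.
split; first by rewrite th_cat tw.
have [|ga_neq0] := eqVneq (g *m theta i a) 0; [by left | right => w' fw' tw'].
have g_neq0 : g != 0 by apply: contraNneq ga_neq0 => ->; rewrite mul0mx.
have [b gb] := zero_minimal_ideal_return th_cat th_nil th_act I_min Ig ga_neq0.
rewrite (represents_rk_catr Ig ga_neq0 rep) (leq_trans _ (rk_cat delta w' b)) //.
apply: represents_rk_min g_neq0 rep _ _; first exact: factor_of_catr.
by rewrite th_cat tw' -mulmxA -th_cat.
Qed.

Lemma sigma_rel_sym (g f : 'M[C]_(ni i)) : sigma_rel g f -> sigma_rel f g.
Proof.
case=> [-> | [w1 [w2 [rep1 [rep2 card12]]]]]; first by left.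
by right; exists w2, w1; rewrite setIC.
Qed.

Lemma sigma_rel_catr_neq0 (g f : 'M[C]_(ni i)) a :
  I g -> I f -> f *m theta i a != 0 -> sigma_rel g f ->
  sigma_rel (g *m theta i a) (f *m theta i a).
Proof.
move=> Ig If fa_neq0 [-> | [w1 [w2 [rep1 [rep2 card12]]]]]; first by left.
right; exists (w1 ++ a), (w2 ++ a).
split; first exact: represents_catr.
split; first exact: represents_catr.
exact: leq_trans card12 (card_imQI_cat w1 (represents_rk_catr If fa_neq0 rep2)).
Qed.

Lemma sigma_rel_catr (g f : 'M[C]_(ni i)) a : I g -> I f ->
  sigma_rel g f -> sigma_rel (g *m theta i a) (f *m theta i a).
Proof.
move=> Ig If gf; have [fa_eq0 | fa_neq0] := eqVneq (f *m theta i a) 0.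
  have [ga_eq0 | ga_neq0] := eqVneq (g *m theta i a) 0.
    by left; rewrite fa_eq0 ga_eq0.
  exact/sigma_rel_sym/sigma_rel_catr_neq0/sigma_rel_sym.
exact: sigma_rel_catr_neq0.
Qed.

End SigmaRel.

Theorem mainTheorem9 (C : numClosedFieldType) (n : nat) (Sigma : finType)
  (delta : 'I_n -> Sigma -> 'I_n)
  (rho : seq Sigma -> 'M[C]_(n.-1))
  (k : nat) (ni : 'I_k -> nat)
  (Phi : forall i : 'I_k, 'M[C]_(n.-1) -> 'M[C]_(ni i))
  (I : forall i : 'I_k, 'M[C]_(ni i) -> Prop) :
  synchronizing delta ->
  induced_rep delta rho ->
  wedderburn_data (gen_alg (fun A => exists w, A = rho w)) Phi ->
  (forall i : 'I_k,
     zero_minimal_ideal (fun g => exists w, g = Phi i (rho w)) (I i)) ->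
  forall (v u : seq Sigma) (i : 'I_k),
    v_minimal (thetaOf Phi rho) v u ->
    i \in supp (thetaOf Phi rho) u ->
    forall g f : 'M[C]_(ni i), I i g -> I i f ->
      @sigma_rel C n Sigma delta k ni (thetaOf Phi rho) u i g f ->
      forall a : seq Sigma,
        @sigma_rel C n Sigma delta k ni (thetaOf Phi rho) u i
          (g *m Phi i (rho a)) (f *m Phi i (rho a)).
Proof.
move=> _ rho_induced [_ [Phi1 [_ [PhiM _]]]] I_min v u i _ _ g f Ig If gf a.
have rho_in_alg w : gen_alg (fun A => exists w, A = rho w) (rho w).
  by move=> P P_gen _ _ _ _; apply: P_gen; exists w.
apply: (sigma_rel_catr (I := I i)) => //.
- by move=> x y; rewrite /thetaOf (induced_rep_cat rho_induced) PhiM ?rho_in_alg.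
- by rewrite /thetaOf (induced_rep_nil rho_induced) Phi1.
- by move=> x y xy; rewrite /thetaOf (induced_rep_act rho_induced xy).
Qed.
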